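(* Let $D_{\mathrm{jnt}}$ be any distribution of $(\mathsf X,\bar{\mathsf Y},\mathsf Y)$ on $\mathcal X\times\{0,1\}\times\{0,1\}$, let $c,\bar c\in[0,1]$ and $\lambda\in\mathbb R$. Define $s^*(x)=\eta(x)-c-\lambda\,(\eta_{\mathrm{DP}}(x)-\bar c)$ for $x\in\mathcal X$. Then the set of minimisers over measurable $f\colon\mathcal X\to[0,1]$ of $$R_{\mathrm{full}}(f)=\mathrm{CS}(f;D,c)-\lambda\,\mathrm{CS}(f;\bar D_{\mathrm{DP}},\bar c)$$ is exactly the set of $f^*$ such that, for $P_{\mathsf X}$-almost every $x$ with $s^*(x)\neq0$, $f^*(x)=\mathbf 1[s^*(x)>0]$.
   Context: $D$ is the law of $(\mathsf X,\mathsf Y)$ and $\bar D_{\mathrm{DP}}$ the law of $(\mathsf X,\bar{\mathsf Y})$ under $D_{\mathrm{jnt}}$; $P_{\mathsf X}$ is the marginal of $\mathsf X$. $\eta(x)=\Pr(\mathsf Y=1\mid\mathsf X=x)$, $\eta_{\mathrm{DP}}(x)=\Pr(\bar{\mathsf Y}=1\mid \mathsf X=x)$. A randomised classifier $f\colon\mathcal X\to[0,1]$ predicts $1$ on $x$ with probability $f(x)$. For a distribution $E$ of $(\mathsf X,\mathsf Z)$ on $\mathcal X\times\{0,1\}$ with $p=\Pr(\mathsf Z=1)$: $\mathrm{FNR}(f;E)=\mathbb E_{\mathsf X\mid \mathsf Z=1}[1-f(\mathsf X)]$, $\mathrm{FPR}(f;E)=\mathbb E_{\mathsf X\mid\mathsf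 Z=0}[f(\mathsf X)]$, and the cost-sensitive risk is $\mathrm{CS}(f;E,c)=p(1-c)\,\mathrm{FNR}(f;E)+(1-p)c\,\mathrm{FPR}(f;E)$. *)

From HB Require Import structures.
From mathcomp Require Import all_boot all_order all_algebra.
From mathcomp Require Import all_classical all_reals all_analysis.
Set Implicit Arguments. Unset Strict Implicit. Unset Printing Implicit Defensive.
Import Order.TTheory GRing.Theory Num.Theory.
Local Open Scope classical_set_scope.
Local Open Scope ring_scope.

(* The joint law D_jnt of (X, Ybar, Y) is realised on a probability space
   (Omega, P): X : Omega -> T measurable, and the events [Ybar = 1] = Yb1,
   [Y = 1] = Y1.  A distribution E of (X, Z) is given by the pair (X, Z1),
   Z1 the event [Z = 1]. *)

Section defs.
Context {dO dT : measure_display} {Omega : measurableType dO}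
  {T : measurableType dT} {R : realType}.
Variables (P : probability Omega R) (X : Omega -> T).

Definition pZ (Z1 : set Omega) : R := fine (P Z1).

Definition FNR (f : T -> R) (Z1 : set Omega) : R :=
  Rintegral P Z1 (fun w => 1 - f (X w)) / pZ Z1.

Definition FPR (f : T -> R) (Z1 : set Omega) : R :=
  Rintegral P (~` Z1) (fun w => f (X w)) / (1 - pZ Z1).

Definition CS (f : T -> R) (Z1 : set Omega) (c : R) : R :=
  pZ Z1 * (1 - c) * FNR f Z1 + (1 - pZ Z1) * c * FPR f Z1.

(* eta is (a version of) the regression function x |-> Pr(Z = 1 | X = x):
   measurable, and Pr(X in A, Z = 1) = E[eta(X) ; X in A] for measurable A. *)
Definition is_cond_prob (Z1 : set Omega) (eta : T -> R) : Prop :=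
  measurable_fun setT eta /\
  forall A : set T, measurable A ->
    fine (P (X @^-1` A `&` Z1)) = Rintegral P (X @^-1` A) (fun w => eta (X w)).

Definition classifier (f : T -> R) : Prop :=
  measurable_fun setT f /\ forall x, 0 <= f x <= 1.

Definition Rfull (Y1 Yb1 : set Omega) (c cbar lambda : R) (f : T -> R) : R :=
  CS f Y1 c - lambda * CS f Yb1 cbar.

Definition is_minimiser (Y1 Yb1 : set Omega) (c cbar lambda : R)
    (f : T -> R) : Prop :=
  classifier f /\
  forall g, classifier g -> Rfull Y1 Yb1 c cbar lambda f <= Rfull Y1 Yb1 c cbar lambda g.

End defs.

(* The defining property of the regression function eta of Z gives, for every
   classifier g,
     CS(g; E, c) = (1 - c) Pr(Z = 1) + E[(c - eta(X)) g(X)],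
   hence R_full(g) = K - E[s(X) g(X)] with K independent of g.  Minimising
   R_full therefore means maximising E[s(X) g(X)] over [0,1]-valued g.
   Pointwise s(x) g(x) <= s(x) 1[s(x) > 0], with equality iff s(x) = 0 or
   g(x) = 1[s(x) > 0]; so f is optimal iff the nonnegative gap
   s(X) (1[s(X) > 0] - f(X)) has integral zero, i.e. vanishes almost surely. *)

From HB Require Import structures.
From mathcomp Require Import all_boot all_order all_algebra.
From mathcomp Require Import all_classical all_reals all_analysis.
From mathcomp Require Import measurable_realfun ring lra.
Import Order.TTheory GRing.Theory Num.Theory.
Local Open Scope classical_set_scope.
Local Open Scope ring_scope.

(* [FNR] and [FPR] divide by [Pr(Z = 1)] and [Pr(Z = 0)], which may vanish;
   since [x / 0 = 0], the product is still [x] when [x] is an integral over the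
   corresponding null event. *)
Lemma mulr_divK_null {R : fieldType} (q x : R) : (q = 0 -> x = 0) -> q * (x / q) = x.
Proof.
have [->|q0] := eqVneq q 0; first by move=> ->; rewrite // mul0r.
by move=> _; rewrite mulrCA divff // mulr1.
Qed.

Definition score {T : Type} {R : pzRingType} (a b : T -> R) (c cbar lambda : R)
    (x : T) : R :=
  a x - c - lambda * (b x - cbar).

Definition sign_threshold {T : Type} {R : numDomainType} (s f : T -> R) (x : T) : R :=
  if 0 < s x then 1 else if s x < 0 then 0 else f x.

Section sign_threshold.
Context {d : measure_display} {T : measurableType d} {R : realType}.
Implicit Types s f g : T -> R.

Lemma classifier_sign_threshold s f :
  measurable_fun setT s -> classifier f -> classifier (sign_threshold s f).
Proof.
move=> ms [mf f01]; split.
  apply: measurable_fun_ifT; [|exact: measurable_cst|].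
    by apply: measurable_fun_ltr => //; exact: measurable_cst.
  apply: measurable_fun_ifT; [|exact: measurable_cst|exact: mf].
  by apply: measurable_fun_ltr => //; exact: measurable_cst.
move=> x; rewrite /sign_threshold; case: ifP => _; first by rewrite ler01 lexx.
by case: ifP => _; [rewrite lexx ler01 | exact: f01].
Qed.

Lemma sign_threshold_gain s f x : 0 <= f x <= 1 ->
  0 <= s x * (sign_threshold s f x - f x).
Proof.
rewrite /sign_threshold => /andP[f0 f1].
by have [sn|sp|->] := ltgtP (s x) 0; [nra | nra | rewrite mul0r].
Qed.

Lemma sign_thresholdE s f x : s x != 0 ->
  sign_threshold s f x = if 0 < s x then 1 else 0.
Proof.
move=> sx0; rewrite /sign_threshold.
by have [| |s0] := ltgtP (s x) 0; last by rewrite s0 eqxx in sx0.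
Qed.

Lemma thresholded_dominates s f g x :
  (s x != 0 -> f x = if 0 < s x then 1 else 0) -> 0 <= g x <= 1 ->
  s x * g x <= s x * f x.
Proof.
move=> hf /andP[g0 g1].
have [sn|sp|->] := ltgtP (s x) 0; last by rewrite !mul0r.
- by rewrite hf ?lt_eqF // (lt_gtF sn); nra.
- by rewrite hf ?gt_eqF // sp; nra.
Qed.

End sign_threshold.

Section clamp01.
Context {d : measure_display} {T : measurableType d} {R : realType}.
Implicit Types g : T -> R.

Definition clamp01 g x : R := Num.max 0 (Num.min (g x) 1).

Definition out01 g : set T := g @^-1` (`]-oo, 0[ `|` `]1, +oo[).

Lemma clamp01_ge0 g x : 0 <= clamp01 g x.
Proof. by rewrite le_max lexx. Qed.

Lemma clamp01_le1 g x : clamp01 g x <= 1.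
Proof. by rewrite ge_max ler01 ge_min lexx orbT. Qed.

Lemma clamp01_id g x : ~ out01 g x -> clamp01 g x = g x.
Proof.
rewrite /out01 /= !in_itv /= andbT => /not_orP[/negP + /negP].
by rewrite -!leNgt => g0 g1; rewrite /clamp01 (min_l g1) (max_r g0).
Qed.

Lemma measurable_clamp01 g : measurable_fun setT g -> measurable_fun setT (clamp01 g).
Proof.
move=> mg; apply: measurable_maxr; first exact: measurable_cst.
by apply: measurable_minr => //; exact: measurable_cst.
Qed.

Lemma measurable_out01 g : measurable_fun setT g -> measurable (out01 g).
Proof.
move=> mg; rewrite /out01 -[_ @^-1` _]setTI; apply: mg => //.
by apply: measurableU; exact: measurable_itv.
Qed.

End clamp01.

Section bounded_integrals.
Context {d : measure_display} {Omega : measurableType d} {R : realType}.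
Variable P : probability Omega R.

Lemma integrable_bounded (D : set Omega) (h : Omega -> R) (M : R) :
  measurable D -> measurable_fun D h -> (forall w, D w -> `|h w| <= M) ->
  P.-integrable D (EFin \o h).
Proof.
move=> mD mh hM; apply: measurable_bounded_integrable => //.
  by rewrite (le_lt_trans (probability_le1 P mD)) // ltry.
exists M; split; first exact: num_real.
by move=> y My w Dw; rewrite /= (le_trans (hM w Dw)) // ltW.
Qed.

Definition bounded_measurable (h : Omega -> R) :=
  measurable_fun setT h /\ exists M, forall w, `|h w| <= M.

Lemma bounded_measurable_integrable (D : set Omega) (h : Omega -> R) :
  measurable D -> bounded_measurable h -> P.-integrable D (EFin \o h).
Proof.
move=> mD [mh [M hM]]; apply: (@integrable_bounded _ _ M) => //.
exact: measurable_funTS.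
Qed.

Lemma bounded_measurable_cst (r : R) : bounded_measurable (fun => r).
Proof. by split; [exact: measurable_cst | exists `|r|]. Qed.

Lemma bounded_measurableD {h1 h2 : Omega -> R} :
  bounded_measurable h1 -> bounded_measurable h2 ->
  bounded_measurable (fun w => h1 w + h2 w).
Proof.
move=> [m1 [M1 hM1]] [m2 [M2 hM2]]; split; first exact: measurable_funD.
by exists (M1 + M2) => w; rewrite (le_trans (ler_normD _ _)) // lerD.
Qed.

Lemma bounded_measurableN {h : Omega -> R} :
  bounded_measurable h -> bounded_measurable (fun w => - h w).
Proof.
move=> [mh [M hM]]; split; first exact: measurable_funN.
by exists M => w; rewrite normrN.
Qed.

Lemma bounded_measurableB {h1 h2 : Omega -> R} :
  bounded_measurable h1 -> bounded_measurable h2 ->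
  bounded_measurable (fun w => h1 w - h2 w).
Proof. by move=> b1 b2; apply: bounded_measurableD b1 (bounded_measurableN b2). Qed.

Lemma bounded_measurableM {h1 h2 : Omega -> R} :
  bounded_measurable h1 -> bounded_measurable h2 ->
  bounded_measurable (fun w => h1 w * h2 w).
Proof.
move=> [m1 [M1 hM1]] [m2 [M2 hM2]]; split; first exact: measurable_funM.
by exists (M1 * M2) => w; rewrite normrM ler_pM.
Qed.

Lemma Rintegral_ge0_ae (h : Omega -> R) (N : set Omega) :
  bounded_measurable h -> P.-negligible N -> (forall w, ~ N w -> 0 <= h w) ->
  0 <= Rintegral P setT h.
Proof.
move=> [mh _] [N' [mN' PN' NN']] h0; rewrite /Rintegral.
rewrite (@ae_eq_integral _ _ _ P setT (fun w => (Num.max (h w) 0)%:E)) //.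
- by apply: fine_ge0; apply: integral_ge0 => w _; rewrite lee_fin le_max lexx orbT.
- exact/measurable_EFinP.
- by apply/measurable_EFinP; apply: measurable_maxr => //; exact: measurable_cst.
- exists N'; split => // w /= /not_implyP [_ hw]; apply: NN'.
  by apply: contrapT => /h0 hw0; apply: hw; rewrite max_l.
Qed.

Lemma Rintegral_le0_negligible (D : set Omega) (h : Omega -> R) (M : R) :
  measurable D -> measurable_fun D h -> (forall w, D w -> 0 <= h w <= M) ->
  Rintegral P D h <= 0 -> P.-negligible (D `&` [set w | h w != 0]).
Proof.
move=> mD mh hM hI.
have hint : P.-integrable D (EFin \o h).
  apply: (@integrable_bounded _ _ M) => // w Dw.
  by have /andP[h0 h1] := hM w Dw; rewrite ger0_norm.
have I0 : (\int[P]_(w in D) (h w)%:E = 0)%E.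
  apply/eqP; rewrite eq_le integral_ge0 ?andbT; last first.
    by move=> w Dw; rewrite lee_fin; case/andP: (hM w Dw).
  by rewrite -(fineK (integrable_fin_num mD hint)) lee_fin.
have : (\int[P]_(w in D) `|(h w)%:E| = 0)%E.
  rewrite -I0; apply: eq_integral => w /[!inE] Dw.
  by rewrite gee0_abs // lee_fin; case/andP: (hM w Dw).
move/(ae_eq_integral_abs P mD (measurable_int _ hint)) => [N [mN PN DN]].
exists N; split => // w [Dw hw]; apply: DN => /= /(_ Dw) /eqP.
by rewrite eqe (negbTE hw).
Qed.

Lemma Rintegral_le0_pos_negligible (D : set Omega) (h : Omega -> R) (M : R) :
  measurable D -> measurable_fun D h -> (forall w, D w -> 0 < h w <= M) ->
  Rintegral P D h <= 0 -> P.-negligible D.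
Proof.
move=> mD mh hM hI.
have hM' w : D w -> 0 <= h w <= M by move=> /hM /andP[/ltW -> ->].
apply: (negligibleS _ (Rintegral_le0_negligible _ _ _ mD mh hM' hI)) => w Dw.
by split => //=; case/andP: (hM w Dw) => /gt_eqF ->.
Qed.

End bounded_integrals.

Section regression.
Context {dO dT : measure_display} {Omega : measurableType dO}
  {T : measurableType dT} {R : realType}.
Variables (P : probability Omega R) (X : Omega -> T).
Hypothesis mX : measurable_fun setT X.

Lemma measurable_preimage (B : set T) : measurable B -> measurable (X @^-1` B).
Proof. by move=> mB; rewrite -[_ @^-1` _]setTI; exact: mX. Qed.

Lemma measurable_preimage_comp (g : T -> R) (A : set R) :
  measurable_fun setT g -> measurable A -> measurable (X @^-1` (g @^-1` A)).
Proof.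
by move=> mg mA; apply: measurable_preimage; rewrite -[_ @^-1` _]setTI; exact: mg.
Qed.

Lemma bounded_measurable_comp01 (u : T -> R) : measurable_fun setT u ->
  (forall x, 0 <= u x <= 1) -> bounded_measurable (fun w => u (X w)).
Proof.
move=> mu u01; split; first exact: measurableT_comp.
by exists 1 => w; have /andP[u0 u1] := u01 (X w); rewrite ger0_norm.
Qed.

Lemma classifier_bounded_measurable {g : T -> R} :
  classifier g -> bounded_measurable (fun w => g (X w)).
Proof. by case=> mg g01; exact: bounded_measurable_comp01. Qed.

Section regression_range.
Variables (Z1 : set Omega) (eta : T -> R).
Hypotheses (mZ1 : measurable Z1) (heta : is_cond_prob P X Z1 eta).

Let meta : measurable_fun setT eta := heta.1.
Let metaX : measurable_fun setT (fun w => eta (X w)) := measurableT_comp meta mX.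

(* [eta (X)] need not be integrable, so the defining identity of [eta] is only
   used on the bands of [eta] where it is bounded. *)
Lemma cond_prob_lt0_negligible : P.-negligible (X @^-1` (eta @^-1` `]-oo, 0[)).
Proof.
have -> : X @^-1` (eta @^-1` `]-oo, 0[) =
    \bigcup_n X @^-1` (eta @^-1` `[- n%:R, 0[).
  apply/seteqP; split => [w /=|w [n _] /=]; rewrite !in_itv /=; last first.
    by case/andP.
  move=> eta0; exists (Num.bound (- eta (X w))) => //=.
  rewrite in_itv /= eta0 andbT lerNl ltW //.
  by apply: archi_boundP; rewrite oppr_ge0 ltW.
apply: negligible_bigcup => n; set D := X @^-1` _.
have mD : measurable D by exact: measurable_preimage_comp.
have ietaD : P.-integrable D (EFin \o fun w => eta (X w)).
  apply: (@integrable_bounded _ _ _ P D _ n%:R) => //; first exact: measurable_funTS.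
  by move=> w; rewrite /D /= in_itv /= => /andP[? ?]; rewrite ltr0_norm // lerNl.
apply: (@Rintegral_le0_pos_negligible _ _ _ P D (fun w => - eta (X w)) n%:R) => //.
- exact/measurable_funTS/measurable_funN.
- move=> w; rewrite /D /= in_itv /= => /andP[etan eta0].
  by rewrite oppr_gt0 eta0 lerNl.
rewrite (@eq_Rintegral _ _ _ P _ (fun w => -1 * eta (X w))); last first.
  by move=> w _; rewrite mulN1r.
rewrite RintegralZl // mulN1r oppr_le0 -heta.2; first exact: fine_ge0.
by rewrite -[_ @^-1` _]setTI; exact: meta.
Qed.

Lemma cond_prob_gt1_negligible : P.-negligible (X @^-1` (eta @^-1` `]1, +oo[)).
Proof.
have -> : X @^-1` (eta @^-1` `]1, +oo[) = \bigcup_n X @^-1` (eta @^-1` `]1, n%:R]).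
  apply/seteqP; split => [w /=|w [n _] /=]; rewrite !in_itv /= ?andbT; last first.
    by case/andP.
  move=> eta1; exists (Num.bound (eta (X w))) => //=.
  rewrite in_itv /= eta1 ltW //.
  by apply: archi_boundP; rewrite (le_trans ler01 (ltW eta1)).
apply: negligible_bigcup => n; set D := X @^-1` _.
have mD : measurable D by exact: measurable_preimage_comp.
have ietaD : P.-integrable D (EFin \o fun w => eta (X w)).
  apply: (@integrable_bounded _ _ _ P D _ n%:R) => //; first exact: measurable_funTS.
  move=> w; rewrite /D /= in_itv /= => /andP[eta1 ?].
  by rewrite ger0_norm // (le_trans ler01 (ltW eta1)).
have i1D : P.-integrable D (EFin \o fun => 1).
  by apply: (@integrable_bounded _ _ _ P D _ 1) => //; rewrite normr1.
apply: (@Rintegral_le0_pos_negligible _ _ _ P D (fun w => eta (X w) - 1) n%:R) => //.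
- by apply/measurable_funTS/measurable_funB => //; exact: measurable_cst.
- move=> w; rewrite /D /= in_itv /= => /andP[eta1 etan].
  by rewrite subr_gt0 eta1 lerBlDr (le_trans etan) // lerDl.
have mDZ : measurable (D `&` Z1) by exact: measurableI.
rewrite RintegralB // Rintegral_cst // mul1r subr_le0 -heta.2; last first.
  by rewrite -[_ @^-1` _]setTI; exact: meta.
by rewrite fine_le ?fin_num_measure // le_measure ?inE.
Qed.

Lemma cond_prob_out01_null : P (X @^-1` out01 eta) = 0%E.
Proof.
apply/negligibleP; first exact/measurable_preimage/measurable_out01.
rewrite /out01 !preimage_setU; apply: negligibleU.
  exact: cond_prob_lt0_negligible.
exact: cond_prob_gt1_negligible.
Qed.

(* [eta] is only a version of the regression function: outside [[0, 1]] (a null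
   set for the law of [X]) its values are arbitrary.  Clamping yields a version
   with values in [[0, 1]], whose integrals are finite, so that its defining
   identity can be stated in [\bar R]. *)
Lemma density_clamp01 (B : set T) : measurable B ->
  P (X @^-1` B `&` Z1) = (\int[P]_(w in X @^-1` B) (clamp01 eta (X w))%:E)%E.
Proof.
move=> mB; have mXB := measurable_preimage _ mB.
have mclampX : measurable_fun setT (fun w => clamp01 eta (X w)).
  exact/measurableT_comp/mX/measurable_clamp01.
have iclamp : P.-integrable (X @^-1` B) (EFin \o fun w => clamp01 eta (X w)).
  apply: (@integrable_bounded _ _ _ P _ _ 1) => //; first exact: measurable_funTS.
  by move=> w _; rewrite ger0_norm ?clamp01_ge0 ?clamp01_le1.
have ae : (\int[P]_(w in X @^-1` B) (clamp01 eta (X w))%:E =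
           \int[P]_(w in X @^-1` B) (eta (X w))%:E)%E.
  apply: ae_eq_integral => //.
  - exact/measurable_EFinP/measurable_funTS.
  - exact/measurable_EFinP/measurable_funTS.
  - exists (X @^-1` out01 eta); split; first exact/measurable_preimage/measurable_out01.
      exact: cond_prob_out01_null.
    move=> w /= /not_implyP [_ hw]; apply: contrapT => out.
    by apply: hw; rewrite clamp01_id.
have mXBZ : measurable (X @^-1` B `&` Z1) by exact: measurableI.
rewrite -(fineK (fin_num_measure P _ mXBZ)) heta.2 // /Rintegral -ae fineK //.
exact: integrable_fin_num.
Qed.

End regression_range.

Section density.
Variables (Z1 : set Omega) (a : T -> R).
Hypotheses (mZ1 : measurable Z1) (ma : measurable_fun setT a)
  (a0 : forall x, 0 <= a x).
Hypothesis ha : forall B, measurable B ->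
  P (X @^-1` B `&` Z1) = (\int[P]_(w in X @^-1` B) (a (X w))%:E)%E.

Local Open Scope ereal_scope.

Let maX : measurable_fun setT (fun w => a (X w)) := measurableT_comp ma mX.

Lemma density_indic (B : set T) : measurable B ->
  \int[P]_(w in Z1) (\1_(X @^-1` B) w)%:E =
  \int[P]_w (a (X w) * \1_(X @^-1` B) w)%:E.
Proof.
move=> mB; have mXB := measurable_preimage _ mB.
rewrite integral_indic //; apply: eq_trans (ha _ mB) _.
rewrite integral_mkcond epatch_indic; apply: eq_integral => w _.
by rewrite /= EFinM.
Qed.

Import HBNNSimple.

Lemma density_nnsfun (h : {nnsfun T >-> R}) :
  \int[P]_(w in Z1) (h (X w))%:E = \int[P]_w (a (X w) * h (X w))%:E.
Proof.
pose I (y : R) (w : Omega) : R := \1_(X @^-1` (h @^-1` [set y])) w.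
have mI (y : R) : measurable_fun setT (I y).
  by apply/measurable_indic/measurable_preimage; exact: measurable_funPTI.
have hE w : h (X w) = (\sum_(y \in range h) y * I y w)%R by rewrite fimfunE.
have I0 y w : (0 <= y * I y w)%R.
  rewrite /I indicE; have [/set_mem/= <-|_] := boolP (w \in _); last by rewrite mulr0.
  by rewrite mulr1.
under eq_integral do rewrite hE -fsumEFin //.
under [RHS]eq_integral do rewrite hE mulr_fsumr -fsumEFin //.
rewrite ge0_integral_fsum //; last 2 first.
- by move=> y; exact/measurable_EFinP/measurable_funTS/measurable_funM.
- by move=> y w _; rewrite lee_fin I0.
rewrite ge0_integral_fsum //; last 2 first.
- by move=> y; exact/measurable_EFinP/measurable_funM/measurable_funM.
- by move=> y w _; rewrite lee_fin mulr_ge0.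
apply: eq_fsbigr => y /[!inE] -[x _ hx]; have y0 : (0 <= y)%R by rewrite -hx.
under eq_integral do rewrite EFinM.
rewrite ge0_integralZl ?lee_fin //; first last.
- by move=> w _; rewrite lee_fin.
- exact/measurable_EFinP/measurable_funTS.
under [RHS]eq_integral do rewrite mulrCA EFinM.
rewrite ge0_integralZl ?lee_fin //; first last.
- by move=> w _; rewrite lee_fin mulr_ge0.
- exact/measurable_EFinP/measurable_funM.
by rewrite density_indic //; exact: measurable_funPTI.
Qed.

Lemma density_ge0 (g : T -> R) : measurable_fun setT g -> (forall x, 0 <= g x)%R ->
  \int[P]_(w in Z1) (g (X w))%:E = \int[P]_w (a (X w) * g (X w))%:E.
Proof.
move=> mg g0; have mgE : measurable_fun setT (EFin \o g) by exact/measurable_EFinP.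
pose h := nnsfun_approx measurableT mgE.
have weighted_limit (D : set Omega) (k : T -> R) : measurable D ->
    measurable_fun setT k -> (forall x, 0 <= k x)%R ->
    \int[P]_(w in D) (k (X w) * g (X w))%:E =
    limn (fun n => \int[P]_(w in D) (k (X w) * h n (X w))%:E).
  move=> mD mk k0; rewrite -monotone_convergence //; first last.
  - move=> w _ m n mn; rewrite lee_fin ler_wpM2l //.
    exact/lefP/nd_nnsfun_approx.
  - by move=> n w _; rewrite lee_fin mulr_ge0.
  - move=> n; apply/measurable_EFinP/measurable_funTS/measurable_funM.
      exact: measurableT_comp mk mX.
    exact/measurableT_comp/mX/measurable_funPT.
  apply: eq_integral => w _; apply/esym/cvg_lim => //; rewrite EFinM.
  under eq_fun do rewrite EFinM.
  by apply: cvgeZl => //; apply: cvg_nnsfun_approx => // x _; rewrite lee_fin.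
transitivity (\int[P]_(w in Z1) (1 * g (X w))%:E).
  by apply: eq_integral => w _; rewrite mul1r.
rewrite (weighted_limit _ (fun => 1%R)) ?(weighted_limit _ a) //.
by congr (limn _); apply/funext => n; under eq_integral do rewrite mul1r; exact: density_nnsfun.
Qed.

End density.

Lemma Rintegral_null (D : set Omega) (h : Omega -> R) :
  measurable D -> measurable_fun setT h -> fine (P D) = 0 -> Rintegral P D h = 0.
Proof.
move=> mD mh PD0; rewrite /Rintegral null_set_integral //.
  exact/measurable_EFinP/measurable_funTS.
by apply: eq_trans (esym (fineK (fin_num_measure P _ mD))) _; rewrite PD0.
Qed.

Section cost_sensitive.
Variables (Z1 : set Omega) (a : T -> R).
Hypotheses (mZ1 : measurable Z1) (ma : measurable_fun setT a)
  (a01 : forall x, 0 <= a x <= 1).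
Hypothesis ha : forall B, measurable B ->
  P (X @^-1` B `&` Z1) = (\int[P]_(w in X @^-1` B) (a (X w))%:E)%E.

Lemma Rintegral_density (g : T -> R) : classifier g ->
  Rintegral P Z1 (fun w => g (X w)) = Rintegral P setT (fun w => a (X w) * g (X w)).
Proof.
case=> mg g01; rewrite /Rintegral (@density_ge0 Z1 a) //.
- by move=> x; case/andP: (a01 x).
- by move=> x; case/andP: (g01 x).
Qed.

Lemma CS_density (c : R) (g : T -> R) : classifier g ->
  CS P X g Z1 c = (1 - c) * pZ P Z1 +
    Rintegral P setT (fun w => (c - a (X w)) * g (X w)).
Proof.
move=> cg; have bg := classifier_bounded_measurable cg.
have ba : bounded_measurable (fun w => a (X w)) by exact: bounded_measurable_comp01.
have mCZ : measurable (~` Z1) by exact: measurableC.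
have pC : fine (P (~` Z1)) = 1 - pZ P Z1.
  by rewrite probability_setC // /pZ fineB // fin_num_measure.
set J := Rintegral P Z1 (fun w => g (X w)).
have FN : Rintegral P Z1 (fun w => 1 - g (X w)) = pZ P Z1 - J.
  rewrite RintegralB ?bounded_measurable_integrable //; last exact: bounded_measurable_cst.
  by rewrite Rintegral_cst // mul1r.
have FP : Rintegral P (~` Z1) (fun w => g (X w)) =
    Rintegral P setT (fun w => g (X w)) - J.
  rewrite -(setUCr Z1) Rintegral_setU ?setUCr ?bounded_measurable_integrable //.
    by rewrite /J addrC addKr.
  by rewrite /disj_set setICr.
have SG : Rintegral P setT (fun w => (c - a (X w)) * g (X w)) =
    c * Rintegral P setT (fun w => g (X w)) -
    Rintegral P setT (fun w => a (X w) * g (X w)).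
  have bcg := bounded_measurableM (bounded_measurable_cst c) bg.
  have bag := bounded_measurableM ba bg.
  under eq_Rintegral do rewrite mulrBl.
  by rewrite RintegralB ?bounded_measurable_integrable // RintegralZl
    ?bounded_measurable_integrable.
rewrite /CS /FNR /FPR -mulrA mulrCA mulr_divK_null; last first.
  move=> p0; apply: Rintegral_null => //.
  exact: (bounded_measurableB (bounded_measurable_cst 1) bg).1.
rewrite -mulrA mulrCA mulr_divK_null; last first.
  by move=> p0; apply: Rintegral_null => //; [exact: bg.1 | rewrite pC].
by rewrite FN FP SG -(Rintegral_density _ cg) /J; lra.
Qed.

End cost_sensitive.

Lemma Rfull_score (Y1 Yb1 : set Omega) (a b : T -> R) (c cbar lambda : R)
    (g : T -> R) :
  measurable Y1 -> measurable Yb1 ->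
  measurable_fun setT a -> measurable_fun setT b ->
  (forall x, 0 <= a x <= 1) -> (forall x, 0 <= b x <= 1) ->
  (forall B, measurable B ->
    P (X @^-1` B `&` Y1) = (\int[P]_(w in X @^-1` B) (a (X w))%:E)%E) ->
  (forall B, measurable B ->
    P (X @^-1` B `&` Yb1) = (\int[P]_(w in X @^-1` B) (b (X w))%:E)%E) ->
  classifier g ->
  Rfull P X Y1 Yb1 c cbar lambda g =
  (1 - c) * pZ P Y1 - lambda * ((1 - cbar) * pZ P Yb1) -
  Rintegral P setT (fun w => score a b c cbar lambda (X w) * g (X w)).
Proof.
move=> mY1 mYb1 ma mb a01 b01 ha hb cg.
rewrite /Rfull (CS_density Y1 a mY1 ma a01 ha c g cg).
rewrite (CS_density Yb1 b mYb1 mb b01 hb cbar g cg).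
have bg := classifier_bounded_measurable cg.
have ba : bounded_measurable (fun w => a (X w)) by exact: bounded_measurable_comp01.
have bb : bounded_measurable (fun w => b (X w)) by exact: bounded_measurable_comp01.
have bcb := bounded_measurableM (bounded_measurableB (bounded_measurable_cst cbar) bb) bg.
have bca := bounded_measurableM (bounded_measurableB (bounded_measurable_cst c) ba) bg.
have blcb := bounded_measurableM (bounded_measurable_cst lambda) bcb.
rewrite [in RHS](@eq_Rintegral _ _ _ P setT
    (fun w => lambda * ((cbar - b (X w)) * g (X w)) - (c - a (X w)) * g (X w))); last first.
  by move=> w _; rewrite /score; ring.
rewrite RintegralB ?bounded_measurable_integrable //.
by rewrite (@RintegralZl _ _ _ P setT (fun w => (cbar - b (X w)) * g (X w)))
  ?bounded_measurable_integrable //; ring.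
Qed.

Lemma ae_pushforward_impl (Q1 Q2 : T -> Prop) (N : set T) :
  measurable N -> P (X @^-1` N) = 0%E -> (forall x, ~ N x -> Q1 x -> Q2 x) ->
  {ae pushforward P X, forall x, Q1 x} -> {ae pushforward P X, forall x, Q2 x}.
Proof.
move=> mN PN Q12 [A [mA PA nQA]]; exists (A `|` N); split.
- exact: measurableU.
- have mXA := measurable_preimage _ mA; have mXN := measurable_preimage _ mN.
  rewrite /pushforward preimage_setU; apply/negligibleP; first exact: measurableU.
  by apply: negligibleU; exact/negligibleP.
- move=> x /= nQ2; have [Nx|nNx] := pselect (N x); first by right.
  by left; apply: nQA => /= Q1x; apply: nQ2; exact: Q12.
Qed.

Section bathtub.
Variables (s f : T -> R).
Hypotheses (ms : measurable_fun setT s) (bs : bounded_measurable (fun w => s (X w)))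
  (cf : classifier f).

Let Rintegral_sB (g h : T -> R) : classifier g -> classifier h ->
  Rintegral P setT (fun w => s (X w) * (g (X w) - h (X w))) =
  Rintegral P setT (fun w => s (X w) * g (X w)) -
  Rintegral P setT (fun w => s (X w) * h (X w)).
Proof.
move=> /classifier_bounded_measurable bg /classifier_bounded_measurable bh.
have bsg := bounded_measurableM bs bg; have bsh := bounded_measurableM bs bh.
under eq_Rintegral do rewrite mulrBr.
by rewrite RintegralB ?bounded_measurable_integrable.
Qed.

Lemma maximiser_ae :
  (forall g, classifier g ->
     Rintegral P setT (fun w => s (X w) * g (X w)) <=
     Rintegral P setT (fun w => s (X w) * f (X w))) ->
  {ae pushforward P X, forall x, s x != 0 -> f x = if 0 < s x then 1 else 0}.
Proof.
move=> fmax; pose f' := sign_threshold s f.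
have cf' : classifier f' by exact: classifier_sign_threshold.
pose H x := s x * (f' x - f x).
have mH : measurable_fun setT H.
  by apply: measurable_funM => //; apply: measurable_funB; [exact: cf'.1 | exact: cf.1].
have [M sM] := bs.2.
have H_neg : P.-negligible (setT `&` [set w | H (X w) != 0]).
  apply: (@Rintegral_le0_negligible _ _ _ P setT (fun w => H (X w)) M) => //.
  - exact: measurableT_comp.
  - move=> w _; rewrite sign_threshold_gain ?cf.2 //=.
    rewrite (le_trans (ler_norm _)) // normrM -[M]mulr1 ler_pM //.
    have /andP[? ?] := cf.2 (X w); have /andP[? ?] := cf'.2 (X w).
    rewrite ler_norml; lra.
  - by rewrite Rintegral_sB // subr_le0; exact: fmax.
have mHN : measurable (H @^-1` [set~ 0]).
  by rewrite -[_ @^-1` _]setTI; apply: mH => //; apply: measurableC; exact: measurable_set1.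
exists (H @^-1` [set~ 0]); split => //.
- rewrite /pushforward; apply/negligibleP; first exact: measurable_preimage.
  by apply: negligibleS H_neg => w /= Hw; split => //; exact/eqP.
- move=> x /= nQ; apply/eqP; rewrite /H mulf_eq0 negb_or subr_eq0.
  move/not_implyP: nQ => [sx0 fx]; rewrite sx0 /=; apply/eqP => f'f; apply: fx.
  by rewrite -f'f /f' sign_thresholdE.
Qed.

Lemma ae_maximiser :
  {ae pushforward P X, forall x, s x != 0 -> f x = if 0 < s x then 1 else 0} ->
  forall g, classifier g ->
    Rintegral P setT (fun w => s (X w) * g (X w)) <=
    Rintegral P setT (fun w => s (X w) * f (X w)).
Proof.
move=> [N [mN PN nQN]] g cg; rewrite -subr_ge0 -Rintegral_sB //.
apply: (@Rintegral_ge0_ae _ _ _ P _ (X @^-1` N)).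
- by apply: bounded_measurableM => //; apply: bounded_measurableB;
    exact: classifier_bounded_measurable.
- by apply/negligibleP => //; exact: measurable_preimage.
- move=> w nNw; rewrite mulrBr subr_ge0 thresholded_dominates ?cg.2 //.
  by move=> sx0; apply: contrapT => nf; apply: nNw; apply: nQN => /(_ sx0).
Qed.

End bathtub.

End regression.

Theorem proposition1 (dO dT : measure_display) (Omega : measurableType dO)
  (T : measurableType dT) (R : realType) (P : probability Omega R)
  (X : Omega -> T) (Y1 Yb1 : set Omega)
  (mX : measurable_fun setT X) (mY1 : measurable Y1) (mYb1 : measurable Yb1)
  (eta etaDP : T -> R)
  (heta : is_cond_prob P X Y1 eta) (hetaDP : is_cond_prob P X Yb1 etaDP)
  (c cbar lambda : R) (hc : 0 <= c <= 1) (hcbar : 0 <= cbar <= 1) :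
  let s := fun x => eta x - c - lambda * (etaDP x - cbar) in
  forall f : T -> R,
    is_minimiser P X Y1 Yb1 c cbar lambda f <->
    (classifier f /\
     {ae pushforward P X, forall x, s x != 0 -> f x = (if 0 < s x then 1 else 0)}).
Proof.
move=> s f; pose a := clamp01 eta; pose b := clamp01 etaDP.
pose s' := score a b c cbar lambda.
have ma : measurable_fun setT a by exact/measurable_clamp01/heta.1.
have mb : measurable_fun setT b by exact/measurable_clamp01/hetaDP.1.
have a01 x : 0 <= a x <= 1 by rewrite clamp01_ge0 clamp01_le1.
have b01 x : 0 <= b x <= 1 by rewrite clamp01_ge0 clamp01_le1.
have ms' : measurable_fun setT s'.
  apply: measurable_funB; first by apply: measurable_funB => //; exact: measurable_cst.
  apply: measurable_funM; first exact: measurable_cst.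
  by apply: measurable_funB => //; exact: measurable_cst.
have bs' : bounded_measurable (fun w => s' (X w)).
  have ba : bounded_measurable (fun w => a (X w)) by exact: bounded_measurable_comp01.
  have bb : bounded_measurable (fun w => b (X w)) by exact: bounded_measurable_comp01.
  exact: bounded_measurableB (bounded_measurableB ba (bounded_measurable_cst c))
    (bounded_measurableM (bounded_measurable_cst lambda)
       (bounded_measurableB bb (bounded_measurable_cst cbar))).
have minE : is_minimiser P X Y1 Yb1 c cbar lambda f <-> classifier f /\
    forall g, classifier g ->
      Rintegral P setT (fun w => s' (X w) * g (X w)) <=
      Rintegral P setT (fun w => s' (X w) * f (X w)).
  have RF g : classifier g -> Rfull P X Y1 Yb1 c cbar lambda g =
      (1 - c) * pZ P Y1 - lambda * ((1 - cbar) * pZ P Yb1) -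
      Rintegral P setT (fun w => s' (X w) * g (X w)).
    exact: (Rfull_score P X mX Y1 Yb1 a b c cbar lambda g mY1 mYb1 ma mb a01 b01
      (density_clamp01 P X mX Y1 eta mY1 heta)
      (density_clamp01 P X mX Yb1 etaDP mYb1 hetaDP)).
  split => -[cf H]; split => // g cg; have := H g cg; rewrite !RF //; lra.
pose N := out01 eta `|` out01 etaDP.
have mN : measurable N by apply: measurableU; apply: measurable_out01; [exact: heta.1 | exact: hetaDP.1].
have PN : P (X @^-1` N) = 0%E.
  have mXo g : measurable_fun setT g -> measurable (X @^-1` out01 g).
    by move=> mg; apply: measurable_preimage => //; exact: measurable_out01.
  rewrite preimage_setU; apply/negligibleP.
    by apply: measurableU; apply: mXo; [exact: heta.1 | exact: hetaDP.1].
  by apply: negligibleU; apply/negligibleP;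
    [exact/mXo/heta.1 | exact: (cond_prob_out01_null P X mX Y1 eta mY1 heta)
    |exact/mXo/hetaDP.1 | exact: (cond_prob_out01_null P X mX Yb1 etaDP mYb1 hetaDP)].
have s's x : ~ N x -> s' x = s x.
  by move=> /not_orP[? ?]; rewrite /s' /score /a /b !clamp01_id.
rewrite minE; split => -[cf H]; split => //.
  apply: (ae_pushforward_impl P X mX _ _ _ mN PN _ (maximiser_ae P X mX s' f ms' bs' cf H)).
  by move=> x nN; rewrite (s's x nN).
apply: (ae_maximiser P X mX s' f bs' cf).
apply: (ae_pushforward_impl P X mX _ _ _ mN PN _ H).
by move=> x nN; rewrite (s's x nN).
Qed.
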